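(* For every $k\ge 3$, $$\sum_{n\ge0}|S_n(123,\,3214,\,21(k+1)k(k-1)\cdots 43)|\,x^n=\frac{1-2x+x^k}{1-3x+x^2+x^k}.$$ *)

From mathcomp Require Import all_boot all_order all_algebra all_fingroup.
Set Implicit Arguments. Unset Strict Implicit. Unset Printing Implicit Defensive.
Import GRing.Theory Num.Theory.

(* A pattern is given in one-line notation as a sequence of naturals
   (e.g. [:: 1; 2; 3] for 123). *)
Definition contains (n : nat) (s : 'S_n) (p : seq nat) : bool :=
  [exists f : {ffun 'I_(size p) -> 'I_n},
     [forall i : 'I_(size p), forall j : 'I_(size p),
        ((i < j)%N ==> (f i < f j)%N) &&
        ((s (f i) < s (f j))%N == (nth 0 p i < nth 0 p j)%N)]].

Definition avoids (n : nat) (s : 'S_n) (P : seq (seq nat)) : bool :=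
  all (fun p => ~~ contains s p) P.

Definition Sn_count (P : seq (seq nat)) (n : nat) : nat :=
  #|[set s : 'S_n | avoids s P]|.

Definition sigma_k (k : nat) : seq nat :=
  [:: 2; 1] ++ [seq (k.+1 - i)%N | i <- iota 0 (k.-1)].

Definition den_coef (k i : nat) : int :=
  (i == 0%N)%:Z - 3 * (i == 1%N)%:Z + (i == 2%N)%:Z + (i == k)%:Z.
Definition num_coef (k i : nat) : int :=
  (i == 0%N)%:Z - 2 * (i == 1%N)%:Z + (i == k)%:Z.

Definition pat123 : seq nat := [:: 1; 2; 3].
Definition pat3214 : seq nat := [:: 3; 2; 1; 4].

From mathcomp Require Import all_boot all_order all_algebra all_fingroup.
From mathcomp Require Import zify ring.
Import GRing.Theory Num.Theory.
Set Implicit Arguments. Unset Strict Implicit. Unset Printing Implicit Defensive.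

(* Every permutation u of {0..n} is obtained from a unique permutation t of
   {0..n-1} by inserting the maximal letter n at some position q.  The new
   letter can only play the part of a maximal letter of a pattern, which for
   the set {123, 3214, 21(k+1)k...3} gives: inserting at q >= 3 always
   creates 123 or 3214; inserting at q = 0 or 1 preserves avoidance; and
   inserting at q = 2 preserves it exactly when t(1) < t(0) and at most k-3
   letters lie strictly between t(0) and n (these letters all come after
   position 2 and must decrease to avoid 123, so k-2 of them would complete
   21(k+1)k...3 together with t(0) t(1) n).
   Let a(n) count the avoiders of length n and F(n, j) those with
   t(1) < t(0) and n <= t(0) + j.  Then a(n+1) = 2 a(n) + F(n, k-2) for
   n >= 1 and F(n+1, j+1) = a(n) + F(n, j), hence
   F(n, k-2) = a(n-1) + ... + a(n-k+2), and subtracting two consecutive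
   instances yields a(m+3) = 3 a(m+2) - a(m+1) - a(m+3-k), which is the
   claimed rational generating function. *)

Definition insert_at (x q : nat) (t : seq nat) := take q t ++ x :: drop q t.

Fixpoint iota_perms (n : nat) : seq (seq nat) :=
  match n with
  | 0 => [:: [::]]
  | m.+1 => [seq insert_at m q t | t <- iota_perms m, q <- iota 0 m.+1]
  end.

Lemma size_insert_at x q t : size (insert_at x q t) = (size t).+1.
Proof. by rewrite /insert_at size_cat /= size_take size_drop; case: ltnP; lia. Qed.

Lemma perm_insert_at x q t : perm_eq (insert_at x q t) (x :: t).
Proof. by rewrite /insert_at -cat1s perm_catCA /= cat_take_drop. Qed.

Lemma insert_at0 x t : insert_at x 0 t = x :: t.
Proof. by rewrite /insert_at take0 drop0. Qed.

Lemma nth_insert_at x q t j : q <= size t ->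
  nth 0 (insert_at x q t) j =
  if j < q then nth 0 t j else if j == q then x else nth 0 t j.-1.
Proof.
move=> hq; rewrite /insert_at nth_cat size_take.
have -> : (if q < size t then q else size t) = q by case: ltnP; lia.
case: ltnP => hj; first by rewrite nth_take.
case: eqP => [->|hne]; first by rewrite subnn.
have -> : j - q = (j - q).-1.+1 by lia.
by rewrite /= nth_drop; congr nth; lia.
Qed.

Lemma insert_at_inj x q1 q2 t1 t2 : x \notin t1 -> x \notin t2 ->
  q1 <= size t1 -> q2 <= size t2 ->
  insert_at x q1 t1 = insert_at x q2 t2 -> q1 = q2 /\ t1 = t2.
Proof.
move=> h1 h2 s1 s2 e.
have index_ins q t : x \notin t -> q <= size t -> index x (insert_at x q t) = q.
  move=> hx hq; rewrite /insert_at index_cat.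
  have -> : (x \in take q t) = false by apply/negP => /mem_take; apply/negP.
  by rewrite /= eqxx addn0 size_take; case: ltnP => // h; apply/eqP; rewrite eqn_leq hq h.
have eq_q : q1 = q2 by rewrite -(index_ins q1 t1) // e index_ins.
split=> //; subst q2.
have take_ins q t : q <= size t -> take q (insert_at x q t) = take q t.
  by move=> hq; rewrite /insert_at take_size_cat // size_take; case: ltnP; lia.
have drop_ins q t : q <= size t -> drop q.+1 (insert_at x q t) = drop q t.
  move=> hq; rewrite /insert_at -cat_rcons drop_size_cat //.
  by rewrite size_rcons size_take; case: ltnP; lia.
by rewrite -(cat_take_drop q1 t1) -(cat_take_drop q1 t2) -take_ins // -drop_ins //
  e take_ins // drop_ins.
Qed.

Lemma perm_cons_iota n : perm_eq (n :: iota 0 n) (iota 0 n.+1).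
Proof. by rewrite -addn1 iotaD /= add0n cats1 perm_sym perm_rcons. Qed.

Lemma mem_iota_perms n t : (t \in iota_perms n) = perm_eq t (iota 0 n).
Proof.
elim: n t => [|n IH] t.
  by rewrite inE; apply/eqP/idP => [->//|/perm_size]; case: t.
apply/idP/idP.
  case/flatten_mapP => t0; rewrite IH => ht0 /mapP [q _ ->].
  apply: perm_trans (perm_insert_at _ _ _) _.
  by apply: perm_trans (perm_cons_iota n); rewrite perm_cons.
move=> ht.
have hn : n \in t by rewrite (perm_mem ht) mem_iota; lia.
set q := index n t; set t0 := take q t ++ drop q.+1 t.
have hq : q < size t by rewrite index_mem.
have def_t : t = insert_at n q t0.
  rewrite /insert_at /t0 take_size_cat ?size_take ?hq //.
  rewrite drop_size_cat ?size_take ?hq //.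
  by rewrite -{1}(cat_take_drop q t) (drop_nth 0 hq) nth_index.
have ht0 : perm_eq t0 (iota 0 n).
  rewrite -(perm_cons n); apply: (@perm_trans _ t).
    by have := perm_insert_at n q t0; rewrite -def_t perm_sym.
  by apply: perm_trans ht _; rewrite perm_sym perm_cons_iota.
apply/flatten_mapP; exists t0; first by rewrite IH.
apply/mapP; exists q => //; rewrite mem_iota /=.
by move: (perm_size ht); rewrite size_iota => <-.
Qed.

Lemma uniq_iota_perms n : uniq (iota_perms n).
Proof.
elim: n => [//|n IH].
apply: (allpairs_uniq IH (iota_uniq 0 n.+1)) => -[t1 q1] [t2 q2] H1 H2.
case: (allpairsP H1) => -[a b] /= [ha hb [-> ->]].
case: (allpairsP H2) => -[c d] /= [hc hd [-> ->]] /= e.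
move: ha hc hb hd; rewrite !mem_iota_perms -[0 :: iota 1 n]/(iota 0 n.+1) !mem_iota.
move=> ha hc hb hd.
have notin t : perm_eq t (iota 0 n) -> n \notin t.
  by move=> ht; rewrite (perm_mem ht) mem_iota; lia.
have size_t t : perm_eq t (iota 0 n) -> size t = n.
  by move/perm_size; rewrite size_iota.
have [hb' hd'] : b <= size a /\ d <= size c by rewrite !size_t //; lia.
by have [-> ->] := insert_at_inj (notin _ ha) (notin _ hc) hb' hd' e.
Qed.

Definition embedding (N : nat) (v : nat -> nat) (p : seq nat) (f : nat -> nat) :=
  [/\ (forall i j, i < j -> j < size p -> f i < f j),
      (forall i, i < size p -> f i < N) &
      (forall i j, i < size p -> j < size p ->
         (v (f i) < v (f j)) = (nth 0 p i < nth 0 p j))].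

Lemma embeddingP N (w : 'I_N -> nat) (v : nat -> nat) p :
  (forall o, w o = v o) ->
  reflect (exists f, embedding N v p f)
   [exists F : {ffun 'I_(size p) -> 'I_N},
      [forall i : 'I_(size p), forall j : 'I_(size p),
        ((i < j) ==> (F i < F j)) && ((w (F i) < w (F j)) == (nth 0 p i < nth 0 p j))]].
Proof.
move=> wv; apply: (iffP idP).
  case/existsP => F /forallP H.
  pose f i := if insub i is Some o then val (F o) else 0.
  have fE i (hi : i < size p) : f i = F (Ordinal hi) by rewrite /f insubT.
  exists f; split.
  - move=> i j hij hj; have hi : i < size p by lia.
    rewrite (fE i hi) (fE j hj).
    by have /forallP/(_ (Ordinal hj))/andP[/implyP/(_ hij) ? _] := H (Ordinal hi).
  - by move=> i hi; rewrite (fE i hi).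
  - move=> i j hi hj; rewrite (fE i hi) (fE j hj) -!wv.
    by have /forallP/(_ (Ordinal hj))/andP[_ /eqP] := H (Ordinal hi).
case=> f [f_incr f_lt f_ord].
apply/existsP; exists [ffun i : 'I_(size p) => Ordinal (f_lt i (ltn_ord i))].
apply/forallP => i; apply/forallP => j; rewrite !ffunE /= !wv f_ord //.
by rewrite eqxx andbT; apply/implyP => hij; apply: f_incr hij (ltn_ord j).
Qed.

Definition seq_contains (t p : seq nat) :=
  exists f, embedding (size t) (nth 0 t) p f.

Definition seq_containsb (t p : seq nat) : bool :=
  [exists F : {ffun 'I_(size p) -> 'I_(size t)},
     [forall i : 'I_(size p), forall j : 'I_(size p),
        ((i < j) ==> (F i < F j)) &&
        ((nth 0 t (F i) < nth 0 t (F j)) == (nth 0 p i < nth 0 p j))]].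

Lemma seq_containsP t p : reflect (seq_contains t p) (seq_containsb t p).
Proof. exact: (@embeddingP _ (fun o => nth 0 t o)). Qed.

Definition seq_avoids (P : seq (seq nat)) t := all (fun p => ~~ seq_containsb t p) P.
Arguments seq_avoids : simpl never.

Definition seq_of_perm n (s : 'S_n) : seq nat := [seq val (s i) | i <- enum 'I_n].

Lemma nth_seq_of_perm n (s : 'S_n) (i : 'I_n) : nth 0 (seq_of_perm s) i = s i.
Proof. by rewrite /seq_of_perm (nth_map i) ?size_enum_ord // nth_ord_enum. Qed.

Lemma size_seq_of_perm n (s : 'S_n) : size (seq_of_perm s) = n.
Proof. by rewrite size_map size_enum_ord. Qed.

Lemma avoids_seq_of_perm n (s : 'S_n) P : avoids s P = seq_avoids P (seq_of_perm s).
Proof.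
apply: eq_all => p; congr negb.
have sE (o : 'I_n) : val (s o) = nth 0 (seq_of_perm s) o by rewrite nth_seq_of_perm.
by apply/(@embeddingP n (fun o => val (s o)) _ p sE)/seq_containsP;
  rewrite /seq_contains size_seq_of_perm.
Qed.

Lemma seq_of_perm_inj n : injective (@seq_of_perm n).
Proof. by move=> s1 s2 e; apply/permP => i; apply: ord_inj; rewrite -!nth_seq_of_perm e. Qed.

Lemma perm_seq_of_perm n (s : 'S_n) : perm_eq (seq_of_perm s) (iota 0 n).
Proof.
apply: uniq_perm (iota_uniq 0 n) _.
  by rewrite map_inj_uniq ?enum_uniq // => i j /val_inj /perm_inj.
move=> x; rewrite mem_iota add0n /=; apply/mapP/idP => [[i _ ->] | x_lt].
  exact: ltn_ord.
by exists ((s^-1)%g (Ordinal x_lt)); rewrite ?mem_enum ?permKV.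
Qed.

Lemma seq_of_perm_onto n t : perm_eq t (iota 0 n) -> exists s : 'S_n, seq_of_perm s = t.
Proof.
move=> ht.
have size_t : size t = n by rewrite (perm_size ht) size_iota.
have nth_lt (i : 'I_n) : nth 0 t i < n.
  have : nth 0 t i \in t by rewrite mem_nth ?size_t.
  by rewrite (perm_mem ht) mem_iota.
pose g (i : 'I_n) : 'I_n := Ordinal (nth_lt i).
have g_inj : injective g.
  move=> i j /(congr1 val) /eqP; rewrite /= nth_uniq ?size_t //.
    by move/eqP/val_inj.
  by rewrite (perm_uniq ht) iota_uniq.
exists (perm g_inj); apply: (@eq_from_nth _ 0); rewrite size_seq_of_perm ?size_t //.
by move=> i hi; rewrite (nth_seq_of_perm _ (Ordinal hi)) permE.
Qed.

Lemma Sn_count_iota_perms P n : Sn_count P n = count (seq_avoids P) (iota_perms n).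
Proof.
rewrite /Sn_count -size_filter cardE.
suff /perm_size <- : perm_eq [seq seq_of_perm s | s <- enum [set s : 'S_n | avoids s P]]
                               (filter (seq_avoids P) (iota_perms n)).
  by rewrite size_map.
apply: uniq_perm.
- by rewrite map_inj_uniq ?enum_uniq //; apply: seq_of_perm_inj.
- by rewrite filter_uniq // uniq_iota_perms.
move=> t; rewrite mem_filter mem_iota_perms; apply/mapP/andP.
  by case=> s; rewrite mem_enum inE avoids_seq_of_perm => hs ->; rewrite hs perm_seq_of_perm.
case=> ht /seq_of_perm_onto [s hs].
by exists s; rewrite // mem_enum inE avoids_seq_of_perm hs.
Qed.

Lemma incr_ge_id m (f : nat -> nat) :
  (forall i j, i < j -> j < m -> f i < f j) -> forall i, i < m -> i <= f i.
Proof.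
move=> f_incr; elim=> [//|i IH] hi.
by have := f_incr i i.+1 (ltnSn i) hi; have := IH (ltnW hi); lia.
Qed.

Lemma incr_fix2 m (f : nat -> nat) : 2 < m ->
  (forall i j, i < j -> j < m -> f i < f j) -> f 2 = 2 -> f 0 = 0 /\ f 1 = 1.
Proof.
move=> hm f_incr f2.
have := f_incr 0 1 isT ltac:(lia); have := f_incr 1 2 isT ltac:(lia).
by have := incr_ge_id f_incr (i := 1) ltac:(lia); lia.
Qed.

Lemma ltn_eqb a b (c : bool) : (c -> a < b) -> (a < b -> c) -> (a < b) = c.
Proof. by case: c => h1 h2; [apply: h1 | apply/negbTE/negP => /h2]. Qed.

Lemma card_inj_between m a b (v : nat -> nat) :
  (forall i, i < m -> a < v i < b) ->
  (forall i j, i < m -> j < m -> v i = v j -> i = j) -> m <= b - a.+1.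
Proof.
move=> v_between v_inj.
have := @uniq_leq_size _ [seq v i | i <- iota 0 m] (iota a.+1 (b - a.+1)).
rewrite size_map !size_iota; apply.
  by rewrite map_inj_in_uniq ?iota_uniq // => i j; rewrite !mem_iota /=; exact: v_inj.
move=> y /mapP [i]; rewrite mem_iota /= => hi ->; rewrite mem_iota.
by have := v_between i hi; lia.
Qed.

Lemma nth_insert_at_skip x q t j : q <= size t ->
  nth 0 (insert_at x q t) (if j < q then j else j.+1) = nth 0 t j.
Proof.
move=> hq; rewrite nth_insert_at //; case: (ltnP j q) => hj; first by rewrite hj.
have -> : (j.+1 < q) = false by lia.
by have -> : (j.+1 == q) = false by lia.
Qed.

Lemma seq_contains_insert_at x q t p : q <= size t ->
  seq_contains t p -> seq_contains (insert_at x q t) p.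
Proof.
move=> hq [f [f_incr f_lt f_ord]].
exists (fun i => if f i < q then f i else (f i).+1); split.
- move=> i j hij hj; have := f_incr i j hij hj.
  by case: (ltnP (f i) q); case: (ltnP (f j) q); lia.
- move=> i hi; rewrite size_insert_at; have := f_lt i hi.
  by case: (ltnP (f i) q); lia.
- by move=> i j hi hj; rewrite !nth_insert_at_skip // f_ord.
Qed.

Lemma seq_contains_of_insert_at x q t p f : q <= size t ->
  embedding (size (insert_at x q t)) (nth 0 (insert_at x q t)) p f ->
  (forall i, i < size p -> f i != q) -> seq_contains t p.
Proof.
move=> hq [f_incr f_lt f_ord] f_neq.
have nth_ins y : y != q ->
    nth 0 (insert_at x q t) y = nth 0 t (if y < q then y else y.-1).
  by move=> hy; rewrite nth_insert_at //; case: ltnP => // _; rewrite (negbTE hy).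
exists (fun i => if f i < q then f i else (f i).-1); split.
- move=> i j hij hj; have hi : i < size p by lia.
  have := f_incr i j hij hj; have := f_neq i hi; have := f_neq j hj.
  by case: (ltnP (f i) q); case: (ltnP (f j) q); lia.
- move=> i hi; have := f_lt i hi; have := f_neq i hi; rewrite size_insert_at.
  by case: (ltnP (f i) q); lia.
- by move=> i j hi hj; rewrite -f_ord // !nth_ins ?f_neq.
Qed.

Lemma nth_insert_at_le x q t j : q <= size t -> {in t, forall y, y < x} ->
  nth 0 (insert_at x q t) j <= x.
Proof.
move=> hq t_lt; rewrite nth_insert_at //.
have nth_le y : nth 0 t y <= x.
  case: (ltnP y (size t)) => hy; last by rewrite nth_default.
  exact/ltnW/t_lt/mem_nth.
by case: ltnP => _; [exact: nth_le | case: eqP].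
Qed.

Lemma insert_at_avoids x q t p : q <= size t -> {in t, forall y, y < x} ->
  ~ seq_contains t p ->
  (forall f i, embedding (size (insert_at x q t)) (nth 0 (insert_at x q t)) p f ->
     i < size p -> f i = q -> (forall j, j < size p -> ~~ (nth 0 p i < nth 0 p j)) ->
     False) ->
  ~ seq_contains (insert_at x q t) p.
Proof.
move=> hq t_lt t_av new_occ [f hf].
have [/hasP [i] | /hasPn f_neq] := boolP (has (fun i => f i == q) (iota 0 (size p))).
  rewrite mem_iota /= => hi /eqP fi; apply: (new_occ f i hf hi fi) => j hj.
  case: hf => _ _ f_ord; rewrite -f_ord // fi nth_insert_at // ltnn eqxx -leqNgt.
  exact: nth_insert_at_le.
by apply/t_av/(seq_contains_of_insert_at hq hf) => i hi; apply: f_neq; rewrite mem_iota.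
Qed.

Section PermIota.
Variables (n : nat) (t : seq nat).
Hypothesis ht : perm_eq t (iota 0 n).

Lemma size_perm_iota : size t = n.
Proof. by rewrite (perm_size ht) size_iota. Qed.

Lemma mem_perm_iota x : (x \in t) = (x < n).
Proof. by rewrite (perm_mem ht) mem_iota. Qed.

Lemma nth_perm_iota_lt i : i < n -> nth 0 t i < n.
Proof. by move=> hi; rewrite -mem_perm_iota mem_nth ?size_perm_iota. Qed.

Lemma nth_perm_iota_neq i j : i < n -> j < n -> i != j -> nth 0 t i != nth 0 t j.
Proof.
move=> hi hj hij; rewrite nth_uniq ?size_perm_iota //.
by rewrite (perm_uniq ht) iota_uniq.
Qed.

Lemma lt_perm_iota : {in t, forall y, y < n}.
Proof. by move=> y; rewrite mem_perm_iota. Qed.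

Lemma size_insert_perm q : size (insert_at n q t) = n.+1.
Proof. by rewrite size_insert_at size_perm_iota. Qed.

Lemma nth_insert_perm_lt q j : q <= n -> j < q -> nth 0 (insert_at n q t) j = nth 0 t j.
Proof. by move=> hq hj; rewrite nth_insert_at ?size_perm_iota ?hj. Qed.

Lemma nth_insert_perm_eq q : q <= n -> nth 0 (insert_at n q t) q = n.
Proof. by move=> hq; rewrite nth_insert_at ?size_perm_iota // ltnn eqxx. Qed.

Lemma nth_insert_perm_gt q j : q <= n -> q < j ->
  nth 0 (insert_at n q t) j = nth 0 t j.-1.
Proof.
move=> hq hj; rewrite nth_insert_at ?size_perm_iota //.
have -> : (j < q) = false by lia.
by have -> : (j == q) = false by lia.
Qed.

End PermIota.

Lemma seq_contains123 u i1 i2 i3 : i1 < i2 -> i2 < i3 -> i3 < size u ->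
  nth 0 u i1 < nth 0 u i2 -> nth 0 u i2 < nth 0 u i3 -> seq_contains u pat123.
Proof.
move=> *; exists (nth 0 [:: i1; i2; i3]); split.
- by move=> [|[|[|i]]] [|[|[|j]]] //= _ _; lia.
- by move=> [|[|[|i]]] //= _; lia.
- by move=> [|[|[|i]]] [|[|[|j]]] //= _ _; apply: ltn_eqb => //; lia.
Qed.

Lemma seq_contains3214 u i1 i2 i3 i4 : i1 < i2 -> i2 < i3 -> i3 < i4 -> i4 < size u ->
  nth 0 u i3 < nth 0 u i2 -> nth 0 u i2 < nth 0 u i1 -> nth 0 u i1 < nth 0 u i4 ->
  seq_contains u pat3214.
Proof.
move=> *; exists (nth 0 [:: i1; i2; i3; i4]); split.
- by move=> [|[|[|[|i]]]] [|[|[|[|j]]]] //= _ _; lia.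
- by move=> [|[|[|[|i]]]] //= _; lia.
- by move=> [|[|[|[|i]]]] [|[|[|[|j]]]] //= _ _; apply: ltn_eqb => //; lia.
Qed.

Lemma size_sigma_k k : 0 < k -> size (sigma_k k) = k.+1.
Proof. by move=> k_gt0; rewrite /sigma_k size_cat size_map size_iota /=; lia. Qed.

Lemma nth_sigma_k k j : 2 <= j <= k -> nth 0 (sigma_k k) j = k.+3 - j.
Proof.
move=> hj; rewrite /sigma_k nth_cat /=; have -> : (j < 2) = false by lia.
by rewrite (nth_map 0) ?size_iota ?nth_iota; lia.
Qed.

Lemma insert_at_ge3_contains n t q : perm_eq t (iota 0 n) -> 3 <= q <= n ->
  seq_contains (insert_at n q t) pat123 \/ seq_contains (insert_at n q t) pat3214.
Proof.
move=> ht /andP [q3 qn].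
set u := insert_at n q t.
have [u0 u1 u2] : [/\ nth 0 u 0 = nth 0 t 0, nth 0 u 1 = nth 0 t 1 & nth 0 u 2 = nth 0 t 2].
  by rewrite /u !(nth_insert_perm_lt ht) //; lia.
have uq : nth 0 u q = n by rewrite /u (nth_insert_perm_eq ht).
have size_u : size u = n.+1 by rewrite /u (size_insert_perm ht).
have t0n : nth 0 t 0 < n by apply: (nth_perm_iota_lt ht); lia.
have t1n : nth 0 t 1 < n by apply: (nth_perm_iota_lt ht); lia.
have t2n : nth 0 t 2 < n by apply: (nth_perm_iota_lt ht); lia.
have t01 : nth 0 t 0 != nth 0 t 1 by apply: (nth_perm_iota_neq ht); lia.
have t12 : nth 0 t 1 != nth 0 t 2 by apply: (nth_perm_iota_neq ht); lia.
case: (ltnP (nth 0 t 0) (nth 0 t 1)) => h01.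
  by left; apply: (@seq_contains123 u 0 1 q); rewrite ?u0 ?u1 ?uq ?size_u //; lia.
case: (ltnP (nth 0 t 1) (nth 0 t 2)) => h12.
  by left; apply: (@seq_contains123 u 1 2 q); rewrite ?u1 ?u2 ?uq ?size_u //; lia.
by right; apply: (@seq_contains3214 u 0 1 2 q); rewrite ?u0 ?u1 ?u2 ?uq ?size_u //; lia.
Qed.

Definition head_descent j n (t : seq nat) :=
  (nth 0 t 1 < nth 0 t 0) && (n <= nth 0 t 0 + j).

Lemma index_insert_at2 n t v : perm_eq t (iota 0 n) -> 2 <= n ->
  nth 0 t 1 < nth 0 t 0 < v -> v < n ->
  nth 0 (insert_at n 2 t) (index v (insert_at n 2 t)) = v /\
  3 <= index v (insert_at n 2 t) < n.+1.
Proof.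
move=> ht hn t01v vn; set u := insert_at n 2 t.
have v_in : v \in u.
  by rewrite /u (perm_mem (perm_insert_at n 2 t)) inE (mem_perm_iota ht); lia.
have uv := nth_index 0 v_in; split => //.
have := index_mem v u; rewrite v_in (size_insert_perm ht) => ->; rewrite andbT.
move: uv; case: (index v u) => [|[|[|m]]] //.
all: by rewrite /u ?(nth_insert_perm_eq ht) ?(nth_insert_perm_lt ht) //; lia.
Qed.

Lemma insert_at2_contains_sigma k n t : 3 <= k -> perm_eq t (iota 0 n) -> 2 <= n ->
  nth 0 t 1 < nth 0 t 0 -> nth 0 t 0 + k <= n.+1 ->
  ~ seq_contains (insert_at n 2 t) pat123 -> seq_contains (insert_at n 2 t) (sigma_k k).
Proof.
move=> hk ht hn t10 t0_small no123.
set u := insert_at n 2 t; set t0 := nth 0 t 0; set t1 := nth 0 t 1.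
have [u0 u1 u2] : [/\ nth 0 u 0 = t0, nth 0 u 1 = t1 & nth 0 u 2 = n].
  by rewrite /u (nth_insert_perm_eq ht) // !(nth_insert_perm_lt ht).
have size_u : size u = n.+1 by rewrite /u (size_insert_perm ht).
have index_big v : t0 < v < n -> nth 0 u (index v u) = v /\ 3 <= index v u < n.+1.
  by case/andP=> t0v vn; apply: index_insert_at2 => //; rewrite t10.
(* positions 0, 1, 2 are sent to t0 t1 n, position j >= 3 to the letter n+2-j *)
pose f j := if j <= 2 then j else index (n.+2 - j) u.
have size_s : size (sigma_k k) = k.+1 by apply: size_sigma_k; lia.
have uf j : j <= k ->
    nth 0 u (f j) = if j == 0 then t0 else if j == 1 then t1 else n.+2 - j.
  rewrite /f; case: j => [|[|[|j]]] hj /=; rewrite ?u0 ?u1 ?u2 //; first lia.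
  by case: (index_big (n.+2 - j.+3)); lia.
have f_big j : 3 <= j <= k -> 3 <= f j < n.+1.
  by move=> hj; rewrite /f ifN; [case: (index_big (n.+2 - j)) | ]; lia.
have sigmaE j : j <= k ->
    nth 0 (sigma_k k) j = if j == 0 then 2 else if j == 1 then 1 else k.+3 - j.
  by case: j => [|[|j]] hj; [ | | rewrite nth_sigma_k /=; lia].
exists f; split; rewrite ?size_s ?size_u.
- move=> i j hij hj.
  case: (leqP j 2) => hj2; first by rewrite /f hj2 ifT //; lia.
  case: (leqP i 2) => hi2; first by have := f_big j; rewrite /f hi2; lia.
  rewrite ltnNge; apply/negP => fji.
  have [ui /andP [i3 i_lt]] := index_big (n.+2 - i) ltac:(lia).
  have [uj /andP [j3 _]] := index_big (n.+2 - j) ltac:(lia).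
  move: fji; rewrite /f.
  have -> : (i <= 2) = false by lia.
  have -> : (j <= 2) = false by lia.
  rewrite leq_eqVlt => /orP [/eqP fji | fji]; first by move: ui; rewrite -fji uj; lia.
  apply: no123; apply: (@seq_contains123 u 1 (index (n.+2 - j) u) (index (n.+2 - i) u)).
  + lia.
  + exact: fji.
  + by rewrite size_u; lia.
  + by rewrite u1 uj; lia.
  + by rewrite uj ui; lia.
- by move=> i hi; case: (leqP i 2) => hi2; [rewrite /f hi2 | have := f_big i]; lia.
- move=> i j hi hj; rewrite !uf ?sigmaE; try lia.
  by case: i hi => [|[|i]] hi; case: j hj => [|[|j]] hj //=; apply: ltn_eqb; lia.
Qed.

Lemma insert_at2_head_descent k n t : 3 <= k -> perm_eq t (iota 0 n) -> 2 <= n ->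
  ~ seq_contains (insert_at n 2 t) pat123 ->
  ~ seq_contains (insert_at n 2 t) (sigma_k k) -> head_descent (k - 2) n t.
Proof.
move=> hk ht hn no123 no_sigma.
have [u0 u1] : nth 0 (insert_at n 2 t) 0 = nth 0 t 0 /\
               nth 0 (insert_at n 2 t) 1 = nth 0 t 1.
  by rewrite !(nth_insert_perm_lt ht).
have u2 := nth_insert_perm_eq ht hn.
have t1n : nth 0 t 1 < n by apply: (nth_perm_iota_lt ht); lia.
have t01 : nth 0 t 0 != nth 0 t 1 by apply: (nth_perm_iota_neq ht); lia.
have t10 : nth 0 t 1 < nth 0 t 0.
  case: (ltnP (nth 0 t 0) (nth 0 t 1)) => [t01' | ]; last by lia.
  case: no123; apply: (@seq_contains123 _ 0 1 2); rewrite ?u0 ?u1 ?u2 //.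
  by rewrite (size_insert_perm ht).
rewrite /head_descent t10 leqNgt; apply/negP => t0_small.
by apply: no_sigma; apply: insert_at2_contains_sigma => //; lia.
Qed.

Lemma insert_at_avoids123 n t q : perm_eq t (iota 0 n) -> q <= n -> q <= 2 ->
  (q = 2 -> nth 0 t 1 < nth 0 t 0) ->
  ~ seq_contains t pat123 -> ~ seq_contains (insert_at n q t) pat123.
Proof.
move=> ht qn q2 q2_desc t_av.
apply: (insert_at_avoids _ (lt_perm_iota ht) t_av); first by rewrite (size_perm_iota ht).
move=> f i [f_incr _ f_ord] hi fi i_max.
have i_le := incr_ge_id f_incr hi.
have i2 : i = 2.
  by move: (i_max 2 isT); clear i_max; case: i hi fi i_le => [|[|[|i]]].
subst i; have q_eq : q = 2 by lia.
move: fi; rewrite q_eq => fi; subst q; have [f0 f1] := incr_fix2 hi f_incr fi.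
have := f_ord 0 1 isT isT; rewrite f0 f1 !(nth_insert_perm_lt ht) //=.
by have := q2_desc erefl; lia.
Qed.

Lemma insert_at_avoids3214 n t q : perm_eq t (iota 0 n) -> q <= n -> q <= 2 ->
  ~ seq_contains t pat3214 -> ~ seq_contains (insert_at n q t) pat3214.
Proof.
move=> ht qn q2 t_av.
apply: (insert_at_avoids _ (lt_perm_iota ht) t_av); first by rewrite (size_perm_iota ht).
move=> f i [f_incr _ _] hi fi i_max.
have i_le := incr_ge_id f_incr hi.
by move: (i_max 3 isT); clear i_max; case: i hi fi i_le => [|[|[|[|i]]]] //=; lia.
Qed.

Lemma insert_at_avoids_sigma k n t q : 3 <= k -> perm_eq t (iota 0 n) ->
  q <= n -> q <= 2 -> (q = 2 -> head_descent (k - 2) n t) ->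
  ~ seq_contains t (sigma_k k) -> ~ seq_contains (insert_at n q t) (sigma_k k).
Proof.
move=> hk ht qn q2 q2_ok t_av.
have size_s : size (sigma_k k) = k.+1 by apply: size_sigma_k; lia.
apply: (insert_at_avoids _ (lt_perm_iota ht) t_av); first by rewrite (size_perm_iota ht).
move=> f i [f_incr f_lt f_ord] hi fi i_max.
rewrite size_s in f_incr f_lt f_ord hi i_max.
have i_le := incr_ge_id f_incr hi.
have i2 : i = 2.
  move: (i_max 2 ltac:(lia)); clear i_max; rewrite (nth_sigma_k (j := 2)); last by lia.
  by case: i hi fi i_le => [|[|i]] //=; lia.
subst i; have q_eq : q = 2 by lia.
move: fi; rewrite q_eq => fi; subst q; have [f0 _] := incr_fix2 hi f_incr fi.
case/andP: (q2_ok erefl) => _ n_small.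
set u := insert_at n 2 t in f_lt f_ord.
have u0 : nth 0 u 0 = nth 0 t 0 by rewrite /u (nth_insert_perm_lt ht).
(* the letters playing k, k-1, ..., 3 are k-2 distinct letters in (t(0), n) *)
pose v j := nth 0 u (f j.+3).
have v_between j : j < k - 2 -> nth 0 t 0 < v j < n.
  move=> hj; have f_gt : 2 < f j.+3 by rewrite -fi; apply: f_incr; lia.
  have := f_lt j.+3 ltac:(lia); rewrite (size_insert_perm ht) => f_lt_n.
  have := f_ord 0 j.+3 isT ltac:(lia); rewrite f0 u0 (nth_sigma_k (j := j.+3)) /=; last by lia.
  rewrite /v /u (nth_insert_perm_gt ht) // => ->.
  by have := nth_perm_iota_lt ht (i := (f j.+3).-1) ltac:(lia); lia.
have v_inj i j : i < k - 2 -> j < k - 2 -> v i = v j -> i = j.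
  move=> hi' hj' e; have := f_ord i.+3 j.+3 ltac:(lia) ltac:(lia).
  have := f_ord j.+3 i.+3 ltac:(lia) ltac:(lia).
  by rewrite -/(v i) -/(v j) e ltnn !nth_sigma_k; lia.
by have := card_inj_between v_between v_inj; lia.
Qed.

Definition patterns k := [:: pat123; pat3214; sigma_k k].

Lemma seq_avoids_patterns k u : seq_avoids (patterns k) u =
  [&& ~~ seq_containsb u pat123, ~~ seq_containsb u pat3214 &
      ~~ seq_containsb u (sigma_k k)].
Proof. by rewrite /seq_avoids /= andbT. Qed.

Lemma avoids_insert_at k n t q : 3 <= k -> perm_eq t (iota 0 n) -> q <= n ->
  seq_avoids (patterns k) (insert_at n q t) =
  seq_avoids (patterns k) t && [|| q == 0, q == 1 | (q == 2) && head_descent (k - 2) n t].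
Proof.
move=> hk ht qn; have qs : q <= size t by rewrite (size_perm_iota ht).
rewrite !seq_avoids_patterns; apply/idP/idP.
  case/and3P => /seq_containsP a /seq_containsP b /seq_containsP c.
  have t_avoids p : ~ seq_contains (insert_at n q t) p -> ~~ seq_containsb t p.
    by move=> h; apply/seq_containsP => /(seq_contains_insert_at n qs).
  rewrite !t_avoids //=.
  case: (leqP 3 q) => [q3 | q2].
    by have [/a | /b] := @insert_at_ge3_contains n t q ht ltac:(lia).
  case: q qn q2 {qs t_avoids} a b c => [|[|[|q]]] //= qn _ a _ c.
  exact: insert_at2_head_descent.
case/andP => /and3P [/seq_containsP a /seq_containsP b /seq_containsP c] hq.
have q2 : q <= 2 by move: hq; case: q {qn qs} => [|[|[|q]]].
have q2_ok : q = 2 -> head_descent (k - 2) n t by move=> e; move: hq; rewrite e.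
apply/and3P; split; apply/seq_containsP.
- by apply: insert_at_avoids123 => // /q2_ok /andP [].
- exact: insert_at_avoids3214.
- exact: insert_at_avoids_sigma.
Qed.

Lemma count_iota_permsS (P : pred (seq nat)) n :
  count P (iota_perms n.+1) =
  sumn [seq count (fun q => P (insert_at n q t)) (iota 0 n.+1) | t <- iota_perms n].
Proof.
rewrite /= count_flatten -map_comp; congr sumn.
by apply: eq_map => t /=; rewrite count_map.
Qed.

Lemma count_iota_small (P : pred nat) n : (forall q, 3 <= q <= n -> P q = false) ->
  count P (iota 0 n.+1) = P 0 + (0 < n) * P 1 + (1 < n) * P 2.
Proof.
case: n => [|[|n]] P_small /=; rewrite ?addn0 ?muln0 ?mul1n //.
rewrite (@eq_in_count _ _ pred0) ?count_pred0; first by lia.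
by move=> q; rewrite mem_iota => hq; apply: P_small; lia.
Qed.

Lemma sumn_map_count T (s : seq T) (A C : pred T) b :
  sumn [seq b * A t + C t | t <- s] = b * count A s + count C s.
Proof. by elim: s => [|x s IH] /=; rewrite ?muln0 // IH mulnDr; lia. Qed.

Lemma head_descent_small j n t : perm_eq t (iota 0 n) -> n <= 1 -> head_descent j n t = false.
Proof.
move=> ht n1; apply/negbTE; rewrite negb_and -leqNgt.
case: n ht n1 => [|[|//]] ht _; last by have := nth_perm_iota_lt ht (i := 0) isT; lia.
by have := size_perm_iota ht; case: t {ht}.
Qed.

Lemma head_descent0 n t : perm_eq t (iota 0 n) -> head_descent 0 n t = false.
Proof.
move=> ht; case: (leqP n 1) => n1; first exact: head_descent_small.
have t0n : nth 0 t 0 < n by apply: (nth_perm_iota_lt ht); lia.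
by rewrite /head_descent addn0 (leqNgt n) t0n andbF.
Qed.

Lemma count_avoiding_inserts k n t (Q : pred (seq nat)) : 3 <= k ->
  perm_eq t (iota 0 n) ->
  count (fun q => seq_avoids (patterns k) (insert_at n q t) && Q (insert_at n q t))
        (iota 0 n.+1) =
  seq_avoids (patterns k) t * (Q (n :: t) + (0 < n) * Q (insert_at n 1 t))
  + (seq_avoids (patterns k) t && head_descent (k - 2) n t && Q (insert_at n 2 t)).
Proof.
move=> hk ht; set A := seq_avoids (patterns k) t.
have avE q : q <= n -> seq_avoids (patterns k) (insert_at n q t) =
    A && [|| q == 0, q == 1 | (q == 2) && head_descent (k - 2) n t].
  exact: avoids_insert_at.
rewrite [LHS]count_iota_small => [|q /andP [q3 qn]]; last first.
  by rewrite avE //; case: q q3 {qn} => [|[|[|q]]] //= _; rewrite andbF.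
rewrite avE //= insert_at0 andbT.
case: (leqP n 1) => [n1 | n2].
  rewrite (head_descent_small _ ht n1) andbF /= mul0n !addn0.
  case: n ht avE n1 => [|[|//]] ht avE _ /=; last rewrite avE //= andbT.
    by rewrite !mul0n !addn0; clear avE; case: A; case: (Q _).
  by clear avE; case: A; case: (Q _); case: (Q _).
by rewrite (avE 1) ?(avE 2) ?(ltnW n2) //=; lia.
Qed.

Definition av k n := Sn_count (patterns k) n.

Definition av_desc k n j :=
  count (fun t => seq_avoids (patterns k) t && head_descent j n t) (iota_perms n).

Lemma av_desc_small k n j : n <= 1 -> av_desc k n j = 0.
Proof.
move=> n1; rewrite /av_desc (@eq_in_count _ _ pred0) ?count_pred0 // => t.
by rewrite mem_iota_perms => ht; rewrite head_descent_small // andbF.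
Qed.

Lemma av_iota_perms k n : av k n = count (seq_avoids (patterns k)) (iota_perms n).
Proof. exact: Sn_count_iota_perms. Qed.

Lemma av0 k : av k 0 = 1.
Proof.
rewrite av_iota_perms /= seq_avoids_patterns.
have no_occ p : 0 < size p -> ~~ seq_containsb [::] p.
  by move=> hp; apply/seq_containsP => -[f [_ f_lt _]]; have := f_lt 0 hp.
by rewrite !no_occ // size_sigma_k.
Qed.

Lemma av_S k n : 3 <= k -> av k n.+1 = (1 + (0 < n)) * av k n + av_desc k n (k - 2).
Proof.
move=> hk; rewrite !av_iota_perms count_iota_permsS /av_desc -sumn_map_count.
congr sumn; apply/eq_in_map => t; rewrite mem_iota_perms => ht.
have := count_avoiding_inserts predT hk ht.
rewrite (eq_count (fun q => andbT _)) => ->.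
by rewrite /= !andbT muln1 mulnC.
Qed.

Lemma av_descS k n j : 3 <= k -> j <= k - 2 ->
  av_desc k n.+1 j.+1 = (0 < n) * av k n + av_desc k n j.
Proof.
move=> hk hj; rewrite /av_desc av_iota_perms count_iota_permsS -sumn_map_count.
congr sumn; apply/eq_in_map => t; rewrite mem_iota_perms => ht.
rewrite count_avoiding_inserts //.
have [n0 | n_gt0] := posnP n.
  by subst n; have /size0nil -> := size_perm_iota ht; case: (seq_avoids _ _).
have t0n := nth_perm_iota_lt ht n_gt0.
have hd0 : head_descent j.+1 n.+1 (n :: t).
  by rewrite /head_descent /= t0n addnS ltnS leq_addr.
have hd1 : head_descent j.+1 n.+1 (insert_at n 1 t) = false.
  by rewrite /head_descent (nth_insert_perm_eq ht) // (nth_insert_perm_lt ht) // ltnNge (ltnW t0n).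
have hd2 : head_descent (k - 2) n t && head_descent j.+1 n.+1 (insert_at n 2 t) =
           head_descent j n t.
  case: (leqP n 1) => [n1 | n2]; first by rewrite !(head_descent_small _ ht n1).
  rewrite /head_descent !(nth_insert_perm_lt ht) // addnS ltnS.
  by case: (_ < _); case: leqP => h; rewrite ?andbT ?andbF //; lia.
by rewrite hd0 hd1 -andbA hd2 /=; case: (seq_avoids _ t).
Qed.

Lemma av_desc_sum k n j : 3 <= k -> j <= k - 2 ->
  av_desc k n j = \sum_(i < j) (i.+2 <= n) * av k (n - i.+1).
Proof.
move=> hk; elim: j n => [|j IH] n hj.
  rewrite big_ord0 /av_desc (@eq_in_count _ _ pred0) ?count_pred0 // => t.
  by rewrite mem_iota_perms => ht; rewrite head_descent0 // andbF.
case: n => [|n].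
  by rewrite av_desc_small // big1 // => i _; rewrite mul0n.
rewrite av_descS; try lia.
by rewrite big_ord_recl IH; [case: n | lia].
Qed.

Lemma av_rec k m : 3 <= k ->
  av k m.+3 + av k m.+1 + (k <= m.+2) * av k (m.+3 - k) = 3 * av k m.+2.
Proof.
move=> hk.
have desc2 : av_desc k m.+2 (k - 2) = av k m.+1 + av_desc k m.+1 (k - 3).
  have -> : k - 2 = (k - 3).+1 by lia.
  by rewrite av_descS //; lia.
have desc1 : av_desc k m.+1 (k - 2) =
             av_desc k m.+1 (k - 3) + (k <= m.+2) * av k (m.+3 - k).
  rewrite !av_desc_sum //; try lia.
  have -> : k - 2 = (k - 3).+1 by lia.
  rewrite big_ord_recr /=; congr (_ + _).
  have -> : m.+3 - k = m.+1 - (k - 3).+1 by lia.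
  by congr (_ * _); lia.
by have := av_S m.+2 hk; have := av_S m.+1 hk; rewrite /=; lia.
Qed.

Lemma av1 k : 3 <= k -> av k 1 = 1.
Proof. by move=> hk; rewrite av_S // av_desc_small // av0. Qed.

Lemma av2 k : 3 <= k -> av k 2 = 2.
Proof. by move=> hk; rewrite av_S // av_desc_small // av1. Qed.

Local Open Scope ring_scope.

Lemma sum_indicator n c (a : nat -> int) :
  \sum_(i < n.+1) ((i == c :> nat)%:Z * a i) = if (c <= n)%N then a c else 0.
Proof.
elim: n => [|n IH].
  by rewrite big_ord1; case: c => [|c] /=; rewrite ?mul1r ?mul0r.
rewrite big_ord_recr /= IH.
case: (ltngtP c n.+1) => [c_lt | c_gt | ->]; last by rewrite ltnn mul1r add0r.
  by rewrite -ltnS c_lt mul0r addr0.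
by rewrite leqNgt ltnW // mul0r addr0.
Qed.

Lemma den_coef_conv k n (a : nat -> int) :
  \sum_(i < n.+1) den_coef k i * a (n - i)%N =
  a n - 3 * (if (0 < n)%N then a (n - 1)%N else 0)
  + (if (1 < n)%N then a (n - 2)%N else 0) + (if (k <= n)%N then a (n - k)%N else 0).
Proof.
have E (i : 'I_n.+1) : den_coef k i * a (n - i)%N =
    (i == 0 :> nat)%:Z * a (n - i)%N - 3 * ((i == 1 :> nat)%:Z * a (n - i)%N)
    + (i == 2 :> nat)%:Z * a (n - i)%N + (i == k :> nat)%:Z * a (n - i)%N.
  by rewrite /den_coef; ring.
rewrite (eq_bigr _ (fun i _ => E i)) !big_split /= sumrN -mulr_sumr.
by rewrite !(sum_indicator n _ (fun i => a (n - i)%N)) subn0.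
Qed.

Lemma av_den_rec k n : (3 <= k)%N ->
  (av k n)%:Z - 3 * (if (0 < n)%N then (av k (n - 1))%:Z else 0)
  + (if (1 < n)%N then (av k (n - 2))%:Z else 0)
  + (if (k <= n)%N then (av k (n - k))%:Z else 0) = num_coef k n.
Proof.
move=> hk; rewrite /num_coef.
case: n => [|[|[|m]]].
- by rewrite av0 /=; case: ifP; lia.
- by rewrite av1 // subnn av0 /=; case: ifP; lia.
- by rewrite av2 // av1 // av0 /=; case: ifP; lia.
have := av_rec m hk; rewrite subn1 subn2 /=.
case: (ltngtP k m.+3) => [k_lt | k_gt | ->].
- by rewrite -ltnS k_lt; lia.
- by rewrite leqNgt (ltnW k_gt); lia.
- by rewrite ltnn subnn av0; lia.
Qed.

Theorem mainTheorem9 (k : nat) (hk : (3 <= k)%N) :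
  forall n : nat,
    \sum_(i < n.+1) den_coef k i *
       (Sn_count [:: pat123; pat3214; sigma_k k] (n - i))%:Z
    = num_coef k n.
Proof. by move=> n; rewrite (den_coef_conv k n (fun m => (av k m)%:Z)) av_den_rec. Qed.
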